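(* In the setting of the context (with assumptions (A.1)–(A.3)), suppose the PMM generates infinite sequences $\{(u_k,v_k)\}$, $\{(z_k,w_k)\}$, $\{\gamma_k\}$, $\{\rho_k\}$; define $x_k=z_{k-1}+\lambda w_{k-1}+\lambda(Cv_k-d)$, $y_k=x_k-\lambda(w_{k-1}-Mu_k)$, and for $k\ge1$ $$\Gamma_k=\sum_{j=1}^k\rho_j\gamma_j,\quad \bar u_k=\frac1{\Gamma_k}\sum_{j=1}^k\rho_j\gamma_ju_j,\quad \bar v_k=\frac1{\Gamma_k}\sum_{j=1}^k\rho_j\gamma_jv_j,\quad \bar x_k=\frac1{\Gamma_k}\sum_{j=1}^k\rho_j\gamma_jx_j,\quad \bar y_k=\frac1{\Gamma_k}\sum_{j=1}^k\rho_j\gamma_jy_j,$$ $$\bar\epsilon_k^u=\frac1{\Gamma_k}\sum_{j=1}^k\rho_j\gamma_j\langle u_j-\bar u_k,-M^*y_j\rangle,\qquad \bar\epsilon_k^v=\frac1{\Gamma_k}\sum_{j=1}^k\rho_j\gamma_j\langle v_j-\bar v_k,-C^*x_j\rangle.$$ Let $d_0$ be the distance from $(z_0,w_0)$ to $S_e(\partial h_1,\partial h_2)$, $\tau=\min\{\lambda,1/\lambda\}$ and $\vartheta=\frac{1}{\tau^2(1-\bar\rho)^2}+1$. Then for every integer $k\ge1$, $$0\in\partial_{\bar\epsilon_k^v}g(\bar v_k)+C^*\bar x_k,\qquad 0\in\partial_{\bar\epsilon_k^u}f(\bar u_k)+M^*\bar y_k,$$ $$\|M\bar u_k+C\bar v_k-d\|\le\frac{4d_0}{k(1-\bar\rho)\tau},\qquad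 \|\bar x_k-\bar y_k\|\le\frac{4d_0}{k(1-\bar\rho)\tau},\qquad \bar\epsilon_k^u+\bar\epsilon_k^v\le\frac{8d_0^2\vartheta}{k(1-\bar\rho)\tau}.$$
   Context: Let $f:\mathbb{R}^{m_1}\to(-\infty,\infty]$, $g:\mathbb{R}^{m_2}\to(-\infty,\infty]$ be proper closed convex, $M:\mathbb{R}^{m_1}\to\mathbb{R}^n$, $C:\mathbb{R}^{m_2}\to\mathbb{R}^n$ linear, $d\in\mathbb{R}^n$; consider $\min\{f(u)+g(v):Mu+Cv=d\}$ with Lagrangian $L(u,v,z)=f(u)+g(v)+\langle Mu+Cv-d,z\rangle$. A saddle point is $(u^*,v^*,z^* )$ with $L(u^*,v^*,z^* )$ finite and $\min_{(u,v)}L(u,v,z^* )=L(u^*,v^*,z^* )=\max_zL(u^*,v^*,z)$. Let $h_1(z)=f^*(-M^*z)$, $h_2(z)=g^*(-C^*z)+\langle d,z\rangle$ ($^*$ on functions = Fenchel conjugate, on operators = adjoint), and $S_e(\partial h_1,\partial h_2)=\{(z,w)\in\mathbb{R}^n\times\mathbb{R}^n:-w\in\partial h_1(z),\ w\in\partial h_2(z)\}$ (a closed convex set). Standing assumptions: (A.1) $L$ has a saddle point; (A.2) $\mathrm{ri}(\mathrm{dom} f^* )\cap\mathrm{range}(M^* )\ne\emptyset$; (A.3) $\mathrm{ri}(\mathrm{dom} g^* )\cap\mathrm{range}(C^* )\ne\emptyset$. For $\epsilon\ge0$, $\partial_\epsilon \theta(x)=\{s:\theta(x')\ge\theta(x)+\langle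 s,x'-x\rangle-\epsilon\ \forall x'\}$. PMM: given $(z_0,w_0)\in\mathbb{R}^n\times\mathbb{R}^n$, $\lambda>0$, $\bar\rho\in[0,1)$, for $k=1,2,\dots$: (1) let $v_k$ be a minimizer of $g(v)+\langle z_{k-1}+\lambda w_{k-1},Cv-d\rangle+\frac\lambda2\|Cv-d\|^2$ and $u_k$ a minimizer of $f(u)+\langle z_{k-1}+\lambda(Cv_k-d),Mu\rangle+\frac\lambda2\|Mu\|^2$; (2) if $\|Mu_k+Cv_k-d\|+\|Mu_k-w_{k-1}\|=0$ stop; otherwise set $\gamma_k=\dfrac{\lambda\|Cv_k-d+w_{k-1}\|^2+\lambda\langle d-Cv_k-Mu_k,w_{k-1}-Mu_k\rangle}{\|Mu_k+Cv_k-d\|^2+\lambda^2\|Mu_k-w_{k-1}\|^2}$; (3) choose $\rho_k\in[1-\bar\rho,1+\bar\rho]$ and set $z_k=z_{k-1}+\rho_k\gamma_k(Mu_k+Cv_k-d)$, $w_k=w_{k-1}-\rho_k\gamma_k\lambda(w_{k-1}-Mu_k)$. *)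

(* R : realType, vectors are row vectors 'rV[R]_n,
   linear maps R^m -> R^n are matrices 'M[R]_(m,n) acting by u |-> u *m M,
   adjoint M^* is z |-> z *m M^T, extended-real valued functions take values
   in \bar R. *)
From HB Require Import structures.
From mathcomp Require Import all_boot all_order all_algebra.
From mathcomp Require Import boolp classical_sets reals constructive_ereal ereal.
Set Implicit Arguments. Unset Strict Implicit. Unset Printing Implicit Defensive.
Import Order.TTheory GRing.Theory Num.Theory.
Local Open Scope classical_set_scope.
Local Open Scope ring_scope.

Section ConvexDefs.
Variable R : realType.

Definition dotp n (u v : 'rV[R]_n) : R := \sum_(i < n) u 0 i * v 0 i.
Definition vnorm n (u : 'rV[R]_n) : R := Num.sqrt (dotp u u).

Definition proper_fun n (f : 'rV[R]_n -> \bar R) : Prop :=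
  (forall x, f x <> -oo%E) /\ (exists x, f x <> +oo%E).

(* convex (extended-real Jensen inequality; 0 * (+oo) = 0) *)
Definition convex_fun n (f : 'rV[R]_n -> \bar R) : Prop :=
  forall (x y : 'rV[R]_n) (t : R), 0 <= t <= 1 ->
    (f ((t *: x + (1 - t) *: y)%R) <= t%:E * f x + (1 - t)%:E * f y)%E.

(* closed: the epigraph {(x,a) | f x <= a} is closed *)
Definition closed_fun n (f : 'rV[R]_n -> \bar R) : Prop :=
  forall (x : 'rV[R]_n) (a : R),
    (forall e : R, 0 < e -> exists (y : 'rV[R]_n) (b : R),
        vnorm (y - x) < e /\ `|b - a| < e /\ (f y <= b%:E)%E) ->
    (f x <= a%:E)%E.

Definition fconj n (f : 'rV[R]_n -> \bar R) (s : 'rV[R]_n) : \bar R :=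
  ereal_sup [set ((dotp s x)%:E - f x)%E | x in [set: 'rV[R]_n]].

Definition edom n (f : 'rV[R]_n -> \bar R) : set 'rV[R]_n :=
  [set x | (f x < +oo)%E].

Definition aff_hull n (C : set 'rV[R]_n) : set 'rV[R]_n :=
  [set x | exists (k : nat) (a : 'I_k -> R) (p : 'I_k -> 'rV[R]_n),
     (forall i, C (p i)) /\ \sum_(i < k) a i = 1 /\ x = \sum_(i < k) a i *: p i].

Definition rel_int n (C : set 'rV[R]_n) : set 'rV[R]_n :=
  [set x | C x /\ exists e : R, 0 < e /\
     forall y, aff_hull C y -> vnorm (y - x) < e -> C y].

(* epsilon-subdifferential (empty outside the effective domain) *)
Definition esubdiff n (th : 'rV[R]_n -> \bar R) (eps : R) (x : 'rV[R]_n)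
  : set 'rV[R]_n :=
  [set s | th x \is a fin_num /\
     forall x', (th x + (dotp s (x' - x)%R - eps)%:E <= th x')%E].

Definition subdiff n (th : 'rV[R]_n -> \bar R) (x : 'rV[R]_n) : set 'rV[R]_n :=
  esubdiff th 0 x.

Definition Se n (h1 h2 : 'rV[R]_n -> \bar R) : set ('rV[R]_n * 'rV[R]_n) :=
  [set p | subdiff h1 p.1 (- p.2) /\ subdiff h2 p.1 p.2].

Definition dist_pair n (z0 w0 : 'rV[R]_n) (S : set ('rV[R]_n * 'rV[R]_n)) : R :=
  inf [set Num.sqrt (dotp (p.1 - z0) (p.1 - z0) + dotp (p.2 - w0) (p.2 - w0))
      | p in S].

Definition lagr m1 m2 n (f : 'rV[R]_m1 -> \bar R) (g : 'rV[R]_m2 -> \bar R)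
  (M : 'M[R]_(m1, n)) (C : 'M[R]_(m2, n)) (d : 'rV[R]_n)
  (u : 'rV[R]_m1) (v : 'rV[R]_m2) (z : 'rV[R]_n) : \bar R :=
  (f u + g v + (dotp (u *m M + v *m C - d) z)%:E)%E.

Definition saddle_point m1 m2 n (f : 'rV[R]_m1 -> \bar R) (g : 'rV[R]_m2 -> \bar R)
  (M : 'M[R]_(m1, n)) (C : 'M[R]_(m2, n)) (d : 'rV[R]_n)
  (us : 'rV[R]_m1) (vs : 'rV[R]_m2) (zs : 'rV[R]_n) : Prop :=
  lagr f g M C d us vs zs \is a fin_num /\
  (forall u v, (lagr f g M C d us vs zs <= lagr f g M C d u v zs)%E) /\
  (forall z, (lagr f g M C d us vs z <= lagr f g M C d us vs zs)%E).

Definition Gam (rho gamma : nat -> R) (k : nat) : R :=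
  \sum_(1 <= j < k.+1) rho j * gamma j.

Definition wavg n (rho gamma : nat -> R) (a : nat -> 'rV[R]_n) (k : nat)
  : 'rV[R]_n :=
  (Gam rho gamma k)^-1 *: \sum_(1 <= j < k.+1) (rho j * gamma j) *: a j.

End ConvexDefs.

(* Optimality of the two proximal steps gives -C^T x_j ∈ ∂g(v_j) and -M^T y_j ∈ ∂f(u_j),
   so (x_j, d - C v_j) and (y_j, -M u_j) lie on the graphs of ∂h2 and ∂h1.  Monotonicity
   against any p in S_e makes the gap phi_j(p) nonnegative, and expanding one step shows
   that rho_j gamma_j phi_j(p) is half the decrease of |(z, w) - p|^2 minus
   rho_j (2 - rho_j) gamma_j^2 G_j / 2, where G_j is the denominator of gamma_j: the iterates
   are Fejér monotone and each step is controlled by |(z_0, w_0) - p|^2.  The ergodic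
   residuals are the telescoping sums (z_k - z_0) / Gamma_k and (w_0 - w_k) / Gamma_k; the
   transportation formula for eps-subdifferentials gives the two inclusions, with
   eps^u_k + eps^v_k equal to the weighted mean of phi_j at (xbar_k, M ubar_k).  Finally
   gamma_j >= tau / 2, so Gamma_k >= k (1 - rhobar) tau / 2, and taking the infimum over S_e
   brings in d_0. *)

From HB Require Import structures.
From mathcomp Require Import all_boot all_order all_algebra.
From mathcomp Require Import boolp classical_sets reals constructive_ereal ereal.
From mathcomp Require Import ring lra.
Import Order.TTheory GRing.Theory Num.Theory.
Local Open Scope classical_set_scope.
Local Open Scope ring_scope.

Set Implicit Arguments. Unset Strict Implicit. Unset Printing Implicit Defensive.

Ltac dotp_lin := rewrite /dotp;
  repeat rewrite -?sumrN ?mulr_sumr ?mulr_suml -?big_split /=;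
  apply: eq_bigr => i _; rewrite !mxE; by field.

Section InnerProduct.
Variables (R : realType) (n : nat).
Implicit Types (a b c : 'rV[R]_n).

Lemma dotpC a b : dotp a b = dotp b a.
Proof. by apply: eq_bigr => i _; rewrite mulrC. Qed.

Lemma dotpDr a b c : dotp a (b + c) = dotp a b + dotp a c.
Proof. dotp_lin. Qed.
Lemma dotpDl a b c : dotp (b + c) a = dotp b a + dotp c a.
Proof. dotp_lin. Qed.
Lemma dotpBr a b c : dotp a (b - c) = dotp a b - dotp a c.
Proof. dotp_lin. Qed.
Lemma dotpBl a b c : dotp (b - c) a = dotp b a - dotp c a.
Proof. dotp_lin. Qed.
Lemma dotpNr a b : dotp a (- b) = - dotp a b.
Proof. dotp_lin. Qed.
Lemma dotpNl a b : dotp (- b) a = - dotp b a.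
Proof. dotp_lin. Qed.
Lemma dotpZr a b t : dotp a (t *: b) = t * dotp a b.
Proof. dotp_lin. Qed.
Lemma dotpZl a b t : dotp (t *: b) a = t * dotp b a.
Proof. dotp_lin. Qed.
Lemma dotp0r a : dotp a 0 = 0.
Proof. by rewrite /dotp big1 // => i _; rewrite mxE mulr0. Qed.

Lemma dotp_sumr a (I : Type) (r : seq I) (P : pred I) (F : I -> 'rV[R]_n) :
  dotp a (\sum_(j <- r | P j) F j) = \sum_(j <- r | P j) dotp a (F j).
Proof. exact: (big_morph (dotp a) (dotpDr a) (dotp0r a)). Qed.

Lemma dotp_suml a (I : Type) (r : seq I) (P : pred I) (F : I -> 'rV[R]_n) :
  dotp (\sum_(j <- r | P j) F j) a = \sum_(j <- r | P j) dotp (F j) a.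
Proof. by rewrite dotpC dotp_sumr; apply: eq_bigr => j _; rewrite dotpC. Qed.

Lemma dotpp_ge0 a : 0 <= dotp a a.
Proof. by apply: sumr_ge0 => i _; rewrite -expr2 sqr_ge0. Qed.

Lemma dotpp_eq0 a : (dotp a a == 0) = (a == 0).
Proof.
apply/idP/eqP => [|->]; last by rewrite dotp0r.
rewrite psumr_eq0 => [/allP a0|i _]; last by rewrite -expr2 sqr_ge0.
apply/rowP => i; have /implyP := a0 i (mem_index_enum i).
by rewrite mxE mulf_eq0 orbb => /(_ isT)/eqP.
Qed.

Lemma dotp_sqrB a b : dotp (a - b) (a - b) = dotp (b - a) (b - a).
Proof. dotp_lin. Qed.

Lemma dotp_sqr_triangle a b c :
  dotp (a - c) (a - c) <= 2 * dotp (b - a) (b - a) + 2 * dotp (b - c) (b - c).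
Proof.
have -> : 2 * dotp (b - a) (b - a) + 2 * dotp (b - c) (b - c)
  = dotp (a - c) (a - c) + dotp (b - a + (b - c)) (b - a + (b - c)) by dotp_lin.
by rewrite lerDl dotpp_ge0.
Qed.

Lemma vnormZ t a : 0 <= t -> vnorm (t *: a) = t * vnorm a.
Proof.
move=> t0; rewrite /vnorm dotpZl dotpZr mulrA -expr2 sqrtrM ?sqr_ge0 //.
by rewrite sqrtr_sqr ger0_norm.
Qed.

Lemma vnorm_le_sqrt a e : 0 <= e -> dotp a a <= 4 * e -> vnorm a <= 2 * Num.sqrt e.
Proof.
move=> e0 ae; have -> : 2 * Num.sqrt e = Num.sqrt (4 * e).
  by rewrite sqrtrM ?ler0n // (_ : 4 = 2 ^+ 2) ?sqrtr_sqr ?ger0_norm //; ring.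
by rewrite ler_sqrt // mulr_ge0.
Qed.

End InnerProduct.

Lemma dotp_mulmx (R : realType) m n (a : 'rV[R]_m) (K : 'M[R]_(m, n)) (b : 'rV[R]_n) :
  dotp (a *m K) b = dotp a (b *m K^T).
Proof.
rewrite /dotp.
under eq_bigr do rewrite mxE big_distrl /=.
under [RHS]eq_bigr do rewrite mxE big_distrr /=.
rewrite exchange_big /=; apply: eq_bigr => l _; apply: eq_bigr => i _.
by rewrite !mxE; ring.
Qed.

Lemma dotpB_mulmx_tr (R : realType) m n (a b : 'rV[R]_m) (K : 'M[R]_(m, n)) (y : 'rV[R]_n) :
  dotp (a - b) (- (y *m K^T)) = dotp (b *m K - a *m K) y.
Proof. by rewrite dotpNr -dotp_mulmx mulmxBl -dotpNl opprB. Qed.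

Section ConvexAnalysis.
Variable R : realType.

Lemma ge0_of_vanishing_perturbation (X K : R) :
  (forall t, 0 < t -> t <= 1 -> 0 <= X + t * K) -> 0 <= X.
Proof.
move=> XK; apply/ler_addgt0Pr => e e0.
pose t := Num.min 1 (e / (`|K| + 1)).
have K1 : 0 < `|K| + 1 by rewrite ltr_pwDr.
have t0 : 0 < t by rewrite lt_min ltr01 divr_gt0.
have tK : t * K <= e.
  apply: (le_trans (ler_norm _)); rewrite normrM gtr0_norm //.
  apply: (@le_trans _ _ (e / (`|K| + 1) * `|K|)).
    by rewrite ler_wpM2r // ge_min lexx orbT.
  by rewrite mulrAC ler_pdivrMr // ler_pM2l //= lerDl.
have t1 : t <= 1 by rewrite ge_min lexx.
by apply: (le_trans (XK t t0 t1)); rewrite lerD2l.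
Qed.

Lemma fconj_ge m (F : 'rV[R]_m -> \bar R) s x : ((dotp s x)%:E - F x <= fconj F s)%E.
Proof. by apply: ereal_sup_ubound; exists x. Qed.

Lemma fconj_subdiff m (F : 'rV[R]_m -> \bar R) x s :
  subdiff F x s -> fconj F s = ((dotp s x)%:E - F x)%E.
Proof.
case=> /fineK Fx sub; apply/le_anti; rewrite fconj_ge andbT.
apply: ge_ereal_sup => _ [x' _ <-]; have := sub x'; rewrite -Fx.
case: (F x') => [r| |] //=; last by rewrite addeNy leNye.
by rewrite -!EFinD !lee_fin dotpBr; lra.
Qed.

Lemma subdiff_fconj_mulmx m n (F : 'rV[R]_m -> \bar R) (K : 'M[R]_(m, n)) x z :
  subdiff F x (- (z *m K^T)) ->
  subdiff (fun z => fconj F (- (z *m K^T))) z (- (x *m K)).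
Proof.
move=> sub; have [/fineK Fx _] := sub.
rewrite /subdiff /esubdiff (fconj_subdiff sub) -Fx -EFinB; split=> // z'.
apply: le_trans (fconj_ge _ _ x); rewrite -Fx -!EFinD lee_fin.
rewrite /= subr0 !dotpNl (dotpC (z *m K^T)) (dotpC (z' *m K^T)) -!dotp_mulmx.
by rewrite dotpBr (dotpC (x *m K)); lra.
Qed.

Lemma subdiffD_dotp n (H : 'rV[R]_n -> \bar R) (c z s : 'rV[R]_n) :
  subdiff H z s -> subdiff (fun z => H z + (dotp c z)%:E)%E z (s + c).
Proof.
case=> /fineK Hz sub; split; first by rewrite -Hz -EFinD.
move=> z'; move: (sub z'); rewrite -Hz -!EFinD.
case: (H z') => [r| |] //=; last by rewrite addye // !leey.
rewrite -EFinD !lee_fin dotpDl !dotpBr; lra.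
Qed.

Lemma subdiff_monotone n (H : 'rV[R]_n -> \bar R) x1 x2 s1 s2 :
  subdiff H x1 s1 -> subdiff H x2 s2 -> 0 <= dotp (x1 - x2) (s1 - s2).
Proof.
case=> /fineK H1 sub1 [/fineK H2 sub2].
have := sub1 x2; have := sub2 x1; rewrite -H1 -H2 -!EFinD !lee_fin.
rewrite !dotpBr !dotpBl (dotpC x1 s1) (dotpC x1 s2) (dotpC x2 s1) (dotpC x2 s2); lra.
Qed.

Lemma prox_subdiff m n (F : 'rV[R]_m -> \bar R) (K : 'M[R]_(m, n))
    (e c : 'rV[R]_n) (lam : R) (x : 'rV[R]_m) :
  let q x' := dotp e (x' *m K - c) + lam / 2 * dotp (x' *m K - c) (x' *m K - c) in
  proper_fun F -> convex_fun F ->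
  (forall x', F x + (q x)%:E <= F x' + (q x')%:E)%E ->
  subdiff F x (- ((e + lam *: (x *m K - c)) *m K^T)).
Proof.
move=> q [Fnoo [x0 Fx0]] Fcvx xmin.
have /fineK Fx : F x \is a fin_num.
  move: (xmin x0) (Fnoo x) Fx0; case: (F x) (F x0) => [a| |] [b| |] //=.
split; rewrite -Fx // => x'; set a := fine (F x).
case Fx': (F x') => [b| |]; [|by rewrite leey|by have := Fnoo x'; rewrite Fx'].
rewrite -EFinD lee_fin subr0 dotpNl dotpC -dotp_mulmx mulmxBl dotpC.
set P := x' *m K; set P0 := x *m K; set s := e + lam *: (P0 - c).
suff : 0 <= b - a + dotp s (P - P0) by lra.
apply: (@ge0_of_vanishing_perturbation _ (lam / 2 * dotp (P - P0) (P - P0))).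
move=> t t0 t1; set xt := t *: x' + (1 - t) *: x.
have t01 : 0 <= t <= 1 by rewrite t1 (ltW t0).
have := Fcvx x' x t t01; rewrite -/xt Fx' -Fx -!EFinM -EFinD => Fxt.
have /fineK Ext : F xt \is a fin_num.
  by move: Fxt (Fnoo xt); case: (F xt).
have := xmin xt; rewrite -Fx -Ext -!EFinD lee_fin.
rewrite -Ext lee_fin in Fxt.
have -> : q xt = q x + t * dotp s (P - P0) + t * (t * (lam / 2 * dotp (P - P0) (P - P0))).
  rewrite /q /s (_ : xt *m K = t *: P + (1 - t) *: P0); last by rewrite mulmxDl !scalemxAl.
  rewrite -/P0; clearbody P P0; dotp_lin.
move=> h; rewrite -/a in h Fxt; rewrite -(pmulr_rge0 _ t0); nra.
Qed.

Lemma convex_dotpp n : convex_fun (fun p : 'rV[R]_n => (dotp p p)%:E).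
Proof.
move=> x y t /andP[t0 t1]; rewrite -!EFinM -EFinD lee_fin.
have -> : t * dotp x x + (1 - t) * dotp y y =
    dotp (t *: x + (1 - t) *: y) (t *: x + (1 - t) *: y)
    + t * (1 - t) * dotp (x - y) (x - y) by dotp_lin.
by rewrite lerDl !mulr_ge0 ?dotpp_ge0 ?subr_ge0.
Qed.

End ConvexAnalysis.


Definition wmean (R : realType) (rho gamma : nat -> R) (a : nat -> R) (k : nat) : R :=
  (Gam rho gamma k)^-1 * \sum_(1 <= j < k.+1) rho j * gamma j * a j.

Section ErgodicAverages.
Variables (R : realType) (rho gamma : nat -> R).
Hypothesis weight_gt0 : forall j, (0 < j)%N -> 0 < rho j * gamma j.

Lemma Gam_gt0 k : (0 < k)%N -> 0 < Gam rho gamma k.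
Proof.
case: k => // k _; rewrite /Gam big_nat_recr //= ltr_wpDl ?weight_gt0 //.
by rewrite big_nat_cond sumr_ge0 // => j /andP[/andP[j0 _] _]; rewrite ltW ?weight_gt0.
Qed.

Lemma GamS k : Gam rho gamma k.+1 = Gam rho gamma k + rho k.+1 * gamma k.+1.
Proof. by rewrite /Gam big_nat_recr. Qed.

Lemma wmean_le (a b : nat -> R) k :
  (forall j, (0 < j)%N -> a j <= b j) -> wmean rho gamma a k <= wmean rho gamma b k.
Proof.
move=> ab; case: k => [|k]; first by rewrite /wmean /Gam !big_geq.
rewrite /wmean; apply: ler_wpM2l; first by rewrite invr_ge0 ltW ?Gam_gt0.
rewrite big_nat_cond [leRHS]big_nat_cond; apply: ler_sum => j /andP[/andP[j0 _] _].
by rewrite ler_wpM2l ?ab // ltW ?weight_gt0.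
Qed.

Lemma wmean_const c k : (0 < k)%N -> wmean rho gamma (fun=> c) k = c.
Proof. by move=> k0; rewrite /wmean -big_distrl /= mulKf // gt_eqF ?Gam_gt0. Qed.

Lemma wmeanD (a b : nat -> R) k :
  wmean rho gamma (fun j => a j + b j) k = wmean rho gamma a k + wmean rho gamma b k.
Proof.
by rewrite /wmean -mulrDr -big_split; congr (_ * _); apply: eq_bigr => j _; rewrite mulrDr.
Qed.

Lemma wmeanN (a : nat -> R) k :
  wmean rho gamma (fun j => - a j) k = - wmean rho gamma a k.
Proof.
by rewrite /wmean -mulrN -sumrN; congr (_ * _); apply: eq_bigr => j _; rewrite mulrN.
Qed.

Lemma wavgD n (a b : nat -> 'rV[R]_n) k :
  wavg rho gamma (fun j => a j + b j) k = wavg rho gamma a k + wavg rho gamma b k.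
Proof.
rewrite /wavg -scalerDr -big_split; congr (_ *: _).
by apply: eq_bigr => j _; rewrite scalerDr.
Qed.

Lemma wavgN n (a : nat -> 'rV[R]_n) k :
  wavg rho gamma (fun j => - a j) k = - wavg rho gamma a k.
Proof.
rewrite /wavg -scalerN -sumrN; congr (_ *: _).
by apply: eq_bigr => j _; rewrite scalerN.
Qed.

Lemma wavgB n (a b : nat -> 'rV[R]_n) k :
  wavg rho gamma (fun j => a j - b j) k = wavg rho gamma a k - wavg rho gamma b k.
Proof. by rewrite wavgD wavgN. Qed.

Lemma wavg_mulmx m n (a : nat -> 'rV[R]_m) (K : 'M[R]_(m, n)) k :
  wavg rho gamma (fun j => a j *m K) k = wavg rho gamma a k *m K.
Proof.
rewrite /wavg -scalemxAl mulmx_suml; congr (_ *: _).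
by apply: eq_bigr => j _; rewrite scalemxAl.
Qed.

Lemma wavg_const n (c : 'rV[R]_n) k : (0 < k)%N -> wavg rho gamma (fun=> c) k = c.
Proof.
by move=> k0; rewrite /wavg -scaler_suml scalerA mulVf ?scale1r // gt_eqF ?Gam_gt0.
Qed.

Lemma dotp_wavgl n (a : nat -> 'rV[R]_n) b k :
  dotp (wavg rho gamma a k) b = wmean rho gamma (fun j => dotp (a j) b) k.
Proof.
rewrite /wavg /wmean dotpZl dotp_suml; congr (_ * _).
by apply: eq_bigr => j _; rewrite dotpZl.
Qed.

Lemma dotp_wavgr n (a : nat -> 'rV[R]_n) b k :
  dotp b (wavg rho gamma a k) = wmean rho gamma (fun j => dotp b (a j)) k.
Proof.
rewrite dotpC dotp_wavgl /wmean; congr (_ * _).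
by apply: eq_bigr => j _; rewrite dotpC.
Qed.

Lemma wavgS n (a : nat -> 'rV[R]_n) k : (0 < k)%N ->
  let t := Gam rho gamma k / Gam rho gamma k.+1 in
  wavg rho gamma a k.+1 = t *: wavg rho gamma a k + (1 - t) *: a k.+1.
Proof.
move=> k0 t; have G0 := Gam_gt0 k0; have w0 := weight_gt0 (ltn0Sn k).
have GS0 : Gam rho gamma k + rho k.+1 * gamma k.+1 != 0 by rewrite gt_eqF ?ltr_wpDr ?ltW.
rewrite /t /wavg GamS big_nat_recr //=.
apply/rowP => i; rewrite !mxE; field.
by rewrite GS0 gt_eqF.
Qed.

Lemma wavg_convex m (F : 'rV[R]_m -> \bar R) (a : nat -> 'rV[R]_m) (Fa : nat -> R) k :
  convex_fun F -> (forall j, (0 < j)%N -> F (a j) = (Fa j)%:E) -> (0 < k)%N ->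
  (F (wavg rho gamma a k) <= (wmean rho gamma Fa k)%:E)%E.
Proof.
move=> Fcvx Fa_def; elim: k => // -[_ _|k IH _].
  have w1 : rho 1 * gamma 1 != 0 by rewrite gt_eqF ?weight_gt0.
  by rewrite /wavg /wmean /Gam !big_nat1 scalerA mulVf // scale1r Fa_def // mulKf.
have G0 := Gam_gt0 (ltn0Sn k); have w0 := weight_gt0 (ltn0Sn k.+1).
have GS0 : 0 < Gam rho gamma k.+2 by rewrite Gam_gt0.
set t := Gam rho gamma k.+1 / Gam rho gamma k.+2.
have t01 : 0 <= t <= 1.
  by rewrite /t divr_ge0 ?(ltW G0) ?(ltW GS0) //= ler_pdivrMr // mul1r (GamS k.+1) lerDl ltW.
have t0 : (0 <= t%:E)%E by rewrite lee_fin; case/andP: t01.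
have t1 : (0 <= (1 - t)%:E)%E by rewrite lee_fin subr_ge0; case/andP: t01.
rewrite wavgS //; apply: le_trans (Fcvx _ _ _ t01) _; rewrite Fa_def //.
apply: le_trans (leeD (lee_wpmul2l t0 (IH isT)) (lexx _)) _.
rewrite -!EFinM -EFinD lee_fin le_eqVlt; apply/orP; left; apply/eqP.
rewrite /t /wmean (GamS k.+1) [X in _ = _ * X]big_nat_recr //=; field.
by rewrite !gt_eqF // -GamS.
Qed.

Lemma wavg_dotpp_le n (a : nat -> 'rV[R]_n) k : (0 < k)%N ->
  dotp (wavg rho gamma a k) (wavg rho gamma a k)
    <= wmean rho gamma (fun j => dotp (a j) (a j)) k.
Proof. by move=> k0; rewrite -lee_fin; apply: wavg_convex (@convex_dotpp _ n) _ k0. Qed.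

Lemma wavg_esubdiff m (F : 'rV[R]_m -> \bar R) (a s : nat -> 'rV[R]_m) k :
  convex_fun F -> (forall x, F x <> -oo%E) -> (0 < k)%N ->
  (forall j, (0 < j)%N -> subdiff F (a j) (s j)) ->
  esubdiff F (wmean rho gamma (fun j => dotp (a j - wavg rho gamma a k) (s j)) k)
    (wavg rho gamma a k) (wavg rho gamma s k).
Proof.
move=> Fcvx Fnoo k0 sub.
have Fa j : (0 < j)%N -> F (a j) = (fine (F (a j)))%:E by move=> /sub [/fineK].
have jensen := wavg_convex Fcvx Fa k0.
have /fineK Fab : F (wavg rho gamma a k) \is a fin_num.
  by move: jensen (Fnoo (wavg rho gamma a k)); case: (F _).
split; rewrite -Fab // => x.
case Fx: (F x) => [fx| |]; [|by rewrite leey|by have := Fnoo x; rewrite Fx].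
rewrite -Fab lee_fin in jensen; rewrite -EFinD lee_fin.
have : wmean rho gamma (fun j => fine (F (a j)) + dotp (s j) (x - a j)) k <= fx.
  rewrite -(wmean_const fx k0); apply: wmean_le => j j0.
  by have [/fineK Faj /(_ x)] := sub j j0; rewrite -Faj Fx -EFinD lee_fin subr0.
suff -> : dotp (wavg rho gamma s k) (x - wavg rho gamma a k)
    - wmean rho gamma (fun j => dotp (a j - wavg rho gamma a k) (s j)) k
    = wmean rho gamma (fun j => dotp (s j) (x - a j)) k by rewrite wmeanD; lra.
rewrite dotp_wavgl -wmeanN -wmeanD /wmean; congr (_ * _).
apply: eq_bigr => j _; congr (_ * _).
by rewrite (dotpC (a j - _)) -dotpBr opprB addrA subrK.
Qed.

End ErgodicAverages.


Definition sqdist_pair (R : realType) n (a b : 'rV[R]_n) (p : 'rV[R]_n * 'rV[R]_n) : R :=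
  dotp (p.1 - a) (p.1 - a) + dotp (p.2 - b) (p.2 - b).

Lemma sqdist_pair_ge0 (R : realType) n (a b : 'rV[R]_n) p : 0 <= sqdist_pair a b p.
Proof. by rewrite addr_ge0 ?dotpp_ge0. Qed.

Section DistPair.
Variables (R : realType) (n : nat) (a b : 'rV[R]_n) (S : set ('rV[R]_n * 'rV[R]_n)).
Hypothesis S_nonempty : exists p, S p.

Lemma dist_pair_ge c :
  (forall p, S p -> c <= Num.sqrt (sqdist_pair a b p)) -> c <= dist_pair a b S.
Proof.
move=> cS; apply: lb_le_inf => [|_ [p Sp <-]]; last exact: cS.
by have [p Sp] := S_nonempty; exists (Num.sqrt (sqdist_pair a b p)), p.
Qed.

Lemma sqr_dist_pair_ge c : 0 <= c ->
  (forall p, S p -> c <= sqdist_pair a b p) -> c <= dist_pair a b S ^+ 2.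
Proof.
move=> c0 cS; have cd : Num.sqrt c <= dist_pair a b S.
  by apply: dist_pair_ge => p /cS /ler_wsqrtr.
by rewrite -[c]sqr_sqrtr // !expr2 ler_pM ?sqrtr_ge0.
Qed.

Lemma dist_pair_ge_scale c e : 0 < e ->
  (forall p, S p -> c <= e * Num.sqrt (sqdist_pair a b p)) -> c <= e * dist_pair a b S.
Proof.
move=> e0 cS; rewrite -ler_pdivrMl //; apply: dist_pair_ge => p /cS.
by rewrite ler_pdivrMl.
Qed.

Lemma sqr_dist_pair_ge_scale c e : 0 < e ->
  (forall p, S p -> c <= e * sqdist_pair a b p) -> c <= e * dist_pair a b S ^+ 2.
Proof.
move=> e0 cS; case: (lerP c 0) => [c0|c0].
  by apply: le_trans c0 _; rewrite mulr_ge0 ?sqr_ge0 ?ltW.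
rewrite -ler_pdivrMl //; apply: sqr_dist_pair_ge => [|p /cS]; last by rewrite ler_pdivrMl.
by rewrite mulr_ge0 ?invr_ge0 ?ltW.
Qed.

End DistPair.

Section SaddlePoint.
Variables (R : realType) (m1 m2 n : nat).
Variables (f : 'rV[R]_m1 -> \bar R) (g : 'rV[R]_m2 -> \bar R).
Variables (M : 'M[R]_(m1, n)) (C : 'M[R]_(m2, n)) (d : 'rV[R]_n).
Variables (us : 'rV[R]_m1) (vs : 'rV[R]_m2) (zs : 'rV[R]_n).
Hypotheses (fP : proper_fun f) (gP : proper_fun g).
Hypothesis saddle : saddle_point f g M C d us vs zs.

Lemma saddle_point_fin_num : f us \is a fin_num /\ g vs \is a fin_num.
Proof.
case: saddle => + _; rewrite /lagr.
by case: (f us) (proj1 fP us) => [?| |] //; case: (g vs) (proj1 gP vs).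
Qed.

Lemma saddle_point_feasible : us *m M + vs *m C - d = 0.
Proof.
have [/fineK Fu /fineK Gv] := saddle_point_fin_num; case: saddle => _ [_ zmax].
apply/eqP; rewrite -dotpp_eq0 eq_le dotpp_ge0 andbT.
have := zmax (zs + (us *m M + vs *m C - d)).
by rewrite /lagr -Fu -Gv -!EFinD lee_fin dotpDr; lra.
Qed.

Lemma saddle_point_subdiff_f : subdiff f us (- (zs *m M^T)).
Proof.
have [/fineK Fu /fineK Gv] := saddle_point_fin_num; case: saddle => _ [umin _].
split; rewrite -Fu // => u; have := umin u vs; rewrite /lagr -Fu -Gv /=.
case: (f u) (proj1 fP u) => [fu _| _ _|//]; last by rewrite leey.
rewrite -!EFinD !lee_fin subr0 dotpNl (dotpC (zs *m _)) -dotp_mulmx mulmxBl !dotpBl !dotpDl; lra.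
Qed.

Lemma saddle_point_subdiff_g : subdiff g vs (- (zs *m C^T)).
Proof.
have [/fineK Fu /fineK Gv] := saddle_point_fin_num; case: saddle => _ [umin _].
split; rewrite -Gv // => v; have := umin us v; rewrite /lagr -Fu -Gv /=.
case: (g v) (proj1 gP v) => [gv _| _ _|//]; last by rewrite leey.
rewrite -!EFinD !lee_fin subr0 dotpNl (dotpC (zs *m _)) -dotp_mulmx mulmxBl !dotpBl !dotpDl; lra.
Qed.

Lemma saddle_point_Se :
  Se (fun z => fconj f (- (z *m M^T)))
     (fun z => fconj g (- (z *m C^T)) + (dotp d z)%:E)%E (zs, us *m M).
Proof.
split; first exact: subdiff_fconj_mulmx saddle_point_subdiff_f.
have -> : us *m M = - (vs *m C) + d.
  by apply: subr0_eq; rewrite -saddle_point_feasible opprD opprK addrA.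
exact: subdiffD_dotp (subdiff_fconj_mulmx saddle_point_subdiff_g).
Qed.

End SaddlePoint.

Section StepSize.
Variables (R : realType) (lam : R).
Hypothesis lam_gt0 : 0 < lam.
Local Notation tau := (Num.min lam lam^-1).

Lemma min_inv_gt0 : 0 < tau.
Proof. by rewrite lt_min lam_gt0 invr_gt0. Qed.

Lemma min_inv_cases :
  (tau = lam /\ lam ^+ 2 <= 1) \/ (tau = lam^-1 /\ lam^-1 <= lam /\ lam^-1 * lam = 1).
Proof.
have il : lam * lam^-1 = 1 by rewrite mulfV ?gt_eqF.
rewrite /Num.min; case: ltP => [lt|le]; [left|right]; split => //.
  by rewrite expr2 -il ler_pM2l // ltW.
by rewrite mulrC.
Qed.

Lemma min_inv_mul_le a b r : 0 <= a -> 0 <= b -> 0 <= r ->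
  tau * (r + lam ^+ 2 * b) <= lam * (a + b + r).
Proof.
move=> a0 b0 r0; case: min_inv_cases => [[-> l1]|[-> [ile il]]].
  by apply: ler_wpM2l; [exact: ltW | nra].
have -> : lam^-1 * (r + lam ^+ 2 * b) = lam^-1 * r + lam * b.
  by rewrite mulrDr expr2 !mulrA il mul1r.
have : lam^-1 * r <= lam * r by rewrite ler_wpM2r.
have : 0 <= lam * a by apply: mulr_ge0 => //; exact: ltW.
nra.
Qed.

Lemma min_inv_sqr_mul_le a b r : 0 <= a -> 0 <= b -> 0 <= r ->
  tau ^+ 2 * ((lam ^+ 2 * a + b) * (r + lam ^+ 2 * b)) <= (lam * (a + b + r)) ^+ 2.
Proof.
move=> a0 b0 r0; have l2 : 0 <= lam ^+ 2 by rewrite sqr_ge0.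
case: min_inv_cases => [[-> l1]|[-> [ile il]]].
  by rewrite exprMn; apply: ler_wpM2l => //; rewrite expr2; apply: ler_pM; nra.
have -> : lam^-1 ^+ 2 * ((lam ^+ 2 * a + b) * (r + lam ^+ 2 * b))
    = (a + lam^-1 ^+ 2 * b) * (r + lam ^+ 2 * b).
  by field; rewrite gt_eqF.
have i2 : lam^-1 * lam^-1 <= 1 by rewrite -il ler_wpM2l // invr_ge0 ltW.
have l1 : 1 <= lam ^+ 2 by rewrite expr2 -il ler_wpM2r // ltW.
have i0 : 0 <= lam^-1 * lam^-1 by rewrite mulr_ge0 // invr_ge0 ltW.
rewrite exprMn expr2 mulrCA; apply: ler_pM; nra.
Qed.

End StepSize.

(* One step (z, w) -> (z + al r, w - al lam (w - U)) with residual r = U + V - d; for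
   al = rho_j gamma_j the last bracket is gamma_j G_j, so the last two terms add up to
   - rho_j (2 - rho_j) gamma_j^2 G_j / 2. *)
Lemma pmm_step_identity (R : realType) n (zp wp U V d p1 p2 : 'rV[R]_n) (lam al : R) :
  let x := zp + lam *: wp + lam *: (V - d) in
  let y := x - lam *: (wp - U) in
  al * (dotp (p1 - x) (p2 - (- V + d)) + dotp (p1 - y) (- p2 - - U)) =
  (sqdist_pair zp wp (p1, p2)
   - sqdist_pair (zp + al *: (U + V - d)) (wp - (al * lam) *: (wp - U)) (p1, p2)) / 2
  + al ^+ 2 / 2 * (dotp (U + V - d) (U + V - d) + lam ^+ 2 * dotp (U - wp) (U - wp))
  - al * (lam * (dotp (V - d + wp) (V - d + wp) + dotp (U - wp) (U - wp)
                 + dotp (U + V - d) (U + V - d)) / 2).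
Proof. rewrite /sqdist_pair /=; dotp_lin. Qed.

Lemma pmm_gap_split (R : realType) n (xb ub vb uj vj xj yj d : 'rV[R]_n) :
  dotp (xb - xj) (ub - (- vj + d)) + dotp (xb - yj) (- ub - - uj) =
  dotp (ub - uj) yj + dotp (vb - vj) xj + (dotp xb (uj + vj - d) - dotp xj (ub + vb - d)).
Proof. dotp_lin. Qed.

Section PMM.
Variables (R : realType) (m1 m2 n : nat).
Variables (f : 'rV[R]_m1 -> \bar R) (g : 'rV[R]_m2 -> \bar R).
Variables (M : 'M[R]_(m1, n)) (C : 'M[R]_(m2, n)) (d : 'rV[R]_n).
Variables (lam rhobar : R) (u : nat -> 'rV[R]_m1) (v : nat -> 'rV[R]_m2).
Variables (z w : nat -> 'rV[R]_n) (gamma rho : nat -> R).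

Hypotheses (fP : proper_fun f) (fV : convex_fun f) (gP : proper_fun g) (gV : convex_fun g).
Hypothesis saddle : exists us vs zs, saddle_point f g M C d us vs zs.
Hypotheses (lam_gt0 : 0 < lam) (rhobar_range : 0 <= rhobar < 1).
Hypothesis v_min : forall k, (0 < k)%N -> forall v' : 'rV[R]_m2,
  (g (v k) + (dotp (z k.-1 + lam *: w k.-1) (v k *m C - d)
              + lam / 2 * dotp (v k *m C - d) (v k *m C - d))%:E
   <= g v' + (dotp (z k.-1 + lam *: w k.-1) (v' *m C - d)
              + lam / 2 * dotp (v' *m C - d) (v' *m C - d))%:E)%E.
Hypothesis u_min : forall k, (0 < k)%N -> forall u' : 'rV[R]_m1,
  (f (u k) + (dotp (z k.-1 + lam *: (v k *m C - d)) (u k *m M)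
              + lam / 2 * dotp (u k *m M) (u k *m M))%:E
   <= f u' + (dotp (z k.-1 + lam *: (v k *m C - d)) (u' *m M)
              + lam / 2 * dotp (u' *m M) (u' *m M))%:E)%E.
Hypothesis not_stopped : forall k, (0 < k)%N ->
  vnorm (u k *m M + v k *m C - d) + vnorm (u k *m M - w k.-1) != 0.
Hypothesis gammaE : forall k, (0 < k)%N ->
  gamma k =
    (lam * dotp (v k *m C - d + w k.-1) (v k *m C - d + w k.-1)
     + lam * dotp (d - v k *m C - u k *m M) (w k.-1 - u k *m M))
    / (dotp (u k *m M + v k *m C - d) (u k *m M + v k *m C - d)
       + lam ^+ 2 * dotp (u k *m M - w k.-1) (u k *m M - w k.-1)).
Hypothesis rho_range : forall k, (0 < k)%N -> 1 - rhobar <= rho k <= 1 + rhobar.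
Hypothesis zE : forall k, (0 < k)%N ->
  z k = z k.-1 + (rho k * gamma k) *: (u k *m M + v k *m C - d).
Hypothesis wE : forall k, (0 < k)%N ->
  w k = w k.-1 - (rho k * gamma k * lam) *: (w k.-1 - u k *m M).

Definition pmm_x k := z k.-1 + lam *: w k.-1 + lam *: (v k *m C - d).
Definition pmm_y k := pmm_x k - lam *: (w k.-1 - u k *m M).

Local Notation x := pmm_x.
Local Notation y := pmm_y.
Local Notation tau := (Num.min lam lam^-1).
Local Notation res j := (u j *m M + v j *m C - d).
Local Notation denom j :=
  (dotp (res j) (res j) + lam ^+ 2 * dotp (u j *m M - w j.-1) (u j *m M - w j.-1)).
Local Notation h1 := (fun zz => fconj f (- (zz *m M^T))).
Local Notation h2 := (fun zz => fconj g (- (zz *m C^T)) + (dotp d zz)%:E)%E.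
Local Notation D p j := (sqdist_pair (z j) (w j) p).
Local Notation decr j := (rho j * (2 - rho j) * gamma j ^+ 2 * denom j).
Local Notation theta := ((tau ^+ 2 * (1 - rhobar) ^+ 2)^-1 + 1).
Local Notation d0 := (dist_pair (z 0) (w 0) (Se h1 h2)).
Local Notation rate k := (k%:R * (1 - rhobar) * tau).
Local Notation numer j :=
  (lam * (dotp (v j *m C - d + w j.-1) (v j *m C - d + w j.-1)
          + dotp (u j *m M - w j.-1) (u j *m M - w j.-1) + dotp (res j) (res j)) / 2).

Lemma pmm_denom_gt0 j : (0 < j)%N -> 0 < denom j.
Proof.
move=> j0; have l2 : 0 < lam ^+ 2 by rewrite exprn_gt0.
have r0 := dotpp_ge0 (res j).
have b0 := mulr_ge0 (ltW l2) (dotpp_ge0 (u j *m M - w j.-1)).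
rewrite lt_def addr_ge0 // andbT; apply: contra (not_stopped j0).
rewrite paddr_eq0 // mulf_eq0 (gt_eqF l2) /= => /andP[/eqP rr /eqP bb].
by rewrite /vnorm rr bb sqrtr0 addr0.
Qed.

Lemma pmm_gamma_denom j : (0 < j)%N -> gamma j * denom j = numer j.
Proof.
move=> j0; rewrite gammaE // divfK ?gt_eqF ?pmm_denom_gt0 //; dotp_lin.
Qed.

Lemma pmm_gamma_ge j : (0 < j)%N -> tau / 2 <= gamma j.
Proof.
move=> j0; rewrite -(ler_pM2r (pmm_denom_gt0 j0)) pmm_gamma_denom //.
have := min_inv_mul_le lam_gt0 (dotpp_ge0 (v j *m C - d + w j.-1))
  (dotpp_ge0 (u j *m M - w j.-1)) (dotpp_ge0 (res j)).
by rewrite addrC; lra.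
Qed.

Lemma pmm_weight_ge j : (0 < j)%N -> (1 - rhobar) * (tau / 2) <= rho j * gamma j.
Proof.
move=> j0; have /andP[rho_ge _] := rho_range j0; have /andP[_ rb1] := rhobar_range.
apply: ler_pM => //; last exact: pmm_gamma_ge.
  by rewrite subr_ge0 ltW.
by rewrite divr_ge0 ?ltW ?min_inv_gt0.
Qed.

Lemma pmm_weight_gt0 j : (0 < j)%N -> 0 < rho j * gamma j.
Proof.
move=> j0; apply: lt_le_trans (pmm_weight_ge j0).
by have /andP[_ rb1] := rhobar_range; rewrite mulr_gt0 ?subr_gt0 ?divr_gt0 ?min_inv_gt0.
Qed.

Lemma pmm_Gam_ge k : k%:R * (1 - rhobar) * tau / 2 <= Gam rho gamma k.
Proof.
have -> : k%:R * (1 - rhobar) * tau / 2 = \sum_(1 <= j < k.+1) (1 - rhobar) * (tau / 2).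
  by rewrite sumr_const_nat subSS subn0 -[RHS]mulr_natl !mulrA.
rewrite /Gam big_nat_cond [leRHS]big_nat_cond; apply: ler_sum => j /andP[/andP[j0 _] _].
exact: pmm_weight_ge.
Qed.

Lemma pmm_subdiff_g j : (0 < j)%N -> subdiff g (v j) (- (x j *m C^T)).
Proof. by move=> j0; apply: prox_subdiff gP gV (v_min j0). Qed.

Lemma pmm_subdiff_f j : (0 < j)%N -> subdiff f (u j) (- (y j *m M^T)).
Proof.
move=> j0; have -> : y j = z j.-1 + lam *: (v j *m C - d) + lam *: (u j *m M - 0).
  rewrite /pmm_y /pmm_x; move: (u j *m M) (v j *m C) (z j.-1) (w j.-1) => U V Z W.
  by apply/rowP => i; rewrite !mxE; ring.
apply: (@prox_subdiff _ _ _ f M _ 0 lam (u j) fP fV) => u'.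
by rewrite !subr0; exact: u_min.
Qed.

Lemma pmm_subdiff_h2 j : (0 < j)%N -> subdiff h2 (x j) (- (v j *m C) + d).
Proof.
move=> j0; have := subdiff_fconj_mulmx (pmm_subdiff_g j0).
exact: subdiffD_dotp.
Qed.

Lemma pmm_subdiff_h1 j : (0 < j)%N -> subdiff h1 (y j) (- (u j *m M)).
Proof. by move=> j0; apply/subdiff_fconj_mulmx/pmm_subdiff_f. Qed.

(* The paper's phi_j(p): the monotonicity gaps of ∂h2 at (x_j, d - C v_j) and of ∂h1 at
   (y_j, - M u_j) against p. *)
Definition pmm_gap j (p : 'rV[R]_n * 'rV[R]_n) :=
  dotp (p.1 - x j) (p.2 - (- (v j *m C) + d)) + dotp (p.1 - y j) (- p.2 - - (u j *m M)).

Lemma pmm_gap_ge0 j p : (0 < j)%N -> Se h1 h2 p -> 0 <= pmm_gap j p.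
Proof.
move=> j0 [Sp1 Sp2]; apply: addr_ge0.
  exact: subdiff_monotone Sp2 (pmm_subdiff_h2 j0).
exact: subdiff_monotone Sp1 (pmm_subdiff_h1 j0).
Qed.

Lemma pmm_fejer_identity j p : (0 < j)%N ->
  rho j * gamma j * pmm_gap j p
    = (D p j.-1 - D p j) / 2 - decr j / 2.
Proof.
move=> j0; case: p => p1 p2; rewrite /pmm_gap /pmm_y /pmm_x /= (zE j0) (wE j0).
rewrite pmm_step_identity -pmm_gamma_denom //; by field.
Qed.

Lemma pmm_decr_ge j : (0 < j)%N ->
  (1 - rhobar) ^+ 2 * (gamma j ^+ 2 * denom j) <= decr j.
Proof.
move=> j0; have /andP[rho_ge rho_le] := rho_range j0; have /andP[rb0 rb1] := rhobar_range.
rewrite -[leRHS]mulrA; apply: ler_wpM2r; last nra.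
by rewrite mulr_ge0 ?sqr_ge0 // ltW ?pmm_denom_gt0.
Qed.

Lemma pmm_fejer j p : (0 < j)%N -> Se h1 h2 p -> D p j <= D p j.-1 - decr j.
Proof.
move=> j0 Sp; have := pmm_fejer_identity p j0.
have := mulr_ge0 (ltW (pmm_weight_gt0 j0)) (pmm_gap_ge0 j0 Sp); lra.
Qed.

Lemma pmm_decr_ge0 j : (0 < j)%N -> 0 <= decr j.
Proof.
move=> j0; apply: le_trans (pmm_decr_ge j0).
exact: mulr_ge0 (sqr_ge0 _) (mulr_ge0 (sqr_ge0 _) (ltW (pmm_denom_gt0 j0))).
Qed.

Lemma pmm_fejer_mono j p : Se h1 h2 p -> D p j <= D p 0.
Proof.
move=> Sp; elim: j => // j IH; apply: le_trans IH.
by have := pmm_fejer (ltn0Sn j) Sp; have := pmm_decr_ge0 (ltn0Sn j); rewrite succnK; lra.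
Qed.

Lemma pmm_step_len_le j : (0 < j)%N ->
  tau ^+ 2 * (dotp (x j - z j.-1) (x j - z j.-1) + dotp (u j *m M - w j.-1) (u j *m M - w j.-1))
    <= 4 * (gamma j ^+ 2 * denom j).
Proof.
move=> j0; have den0 := pmm_denom_gt0 j0.
have -> : dotp (x j - z j.-1) (x j - z j.-1)
    = lam ^+ 2 * dotp (v j *m C - d + w j.-1) (v j *m C - d + w j.-1).
  by rewrite /pmm_x; dotp_lin.
rewrite -(ler_pM2r den0) -mulrA.
apply: le_trans (min_inv_sqr_mul_le lam_gt0 (dotpp_ge0 _) (dotpp_ge0 _) (dotpp_ge0 (res j))) _.
rewrite le_eqVlt; apply/orP; left; apply/eqP.
rewrite (_ : lam * _ = 2 * (gamma j * denom j)); last by rewrite pmm_gamma_denom //; field.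
by rewrite addrC; ring.
Qed.

Lemma pmm_iterate_bound j p : (0 < j)%N -> Se h1 h2 p ->
  dotp (x j - z 0) (x j - z 0) + dotp (u j *m M - w 0) (u j *m M - w 0)
    <= 8 * D p 0 * theta.
Proof.
move=> j0 Sp; case: p Sp => p1 p2 Sp.
have /andP[_ rb1] := rhobar_range.
set c := tau ^+ 2 * (1 - rhobar) ^+ 2.
have c0 : 0 < c by rewrite mulr_gt0 ?exprn_gt0 ?min_inv_gt0 ?subr_gt0.
(* c times the bracket is <= 4 (1 - rhobar)^2 gamma_j^2 G_j <= 4 decr j <= 4 D p 0. *)
have step_le : c * (dotp (x j - z j.-1) (x j - z j.-1)
                    + dotp (u j *m M - w j.-1) (u j *m M - w j.-1)) <= 4 * D (p1, p2) 0.
  have := pmm_fejer j0 Sp; have := pmm_fejer_mono j.-1 Sp; have := pmm_decr_ge j0.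
  have := pmm_step_len_le j0; rewrite -subr_ge0 => /(mulr_ge0 (sqr_ge0 (1 - rhobar))).
  have := dotpp_ge0 (p1 - z j); have := dotpp_ge0 (p2 - w j).
  rewrite /c /sqdist_pair /=; nra.
rewrite mulrC -ler_pdivlMr // in step_le.
have := dotp_sqr_triangle (x j) (z j.-1) (z 0).
have := dotp_sqr_triangle (z j.-1) p1 (z 0).
have := dotp_sqr_triangle (u j *m M) (w j.-1) (w 0).
have := dotp_sqr_triangle (w j.-1) p2 (w 0).
have := pmm_fejer_mono j.-1 Sp.
rewrite /sqdist_pair /= (dotp_sqrB (z j.-1) (x j)) (dotp_sqrB (w j.-1) (u j *m M)).
rewrite /sqdist_pair /= in step_le; rewrite -/c; nra.
Qed.

Lemma pmm_Se_nonempty : exists p, Se h1 h2 p.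
Proof.
case: saddle => us [vs [zs sp]]; exists (zs, us *m M).
exact: saddle_point_Se fP gP sp.
Qed.

Lemma pmm_iterate_drift k p : Se h1 h2 p ->
  dotp (z k - z 0) (z k - z 0) + dotp (w k - w 0) (w k - w 0) <= 4 * D p 0.
Proof.
case: p => p1 p2 Sp; have := pmm_fejer_mono k Sp.
have := dotp_sqr_triangle (z k) p1 (z 0); have := dotp_sqr_triangle (w k) p2 (w 0).
rewrite /sqdist_pair /= (dotp_sqrB p1 (z k)) (dotp_sqrB p2 (w k)); lra.
Qed.

Lemma pmm_rate_gt0 k : (0 < k)%N -> 0 < rate k.
Proof.
by move=> k0; have /andP[_ rb1] := rhobar_range; rewrite !mulr_gt0 ?ltr0n ?subr_gt0 ?min_inv_gt0.
Qed.

Lemma pmm_scaled_bound (X : 'rV[R]_n) k p : (0 < k)%N -> dotp X X <= 4 * D p 0 ->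
  vnorm ((Gam rho gamma k)^-1 *: X) <= 4 / rate k * Num.sqrt (D p 0).
Proof.
move=> k0 XD; have rate0 := pmm_rate_gt0 k0.
have G0 := Gam_gt0 pmm_weight_gt0 k0.
have GK : (Gam rho gamma k)^-1 <= 2 / rate k.
  by rewrite -[2 / _]invf_div lef_pV2 ?posrE ?divr_gt0 // pmm_Gam_ge.
have Gi0 : 0 <= (Gam rho gamma k)^-1 by rewrite invr_ge0 ltW.
rewrite vnormZ // (_ : 4 / rate k = 2 / rate k * 2); last by rewrite [RHS]mulrAC -natrM.
rewrite -mulrA; apply: ler_pM => //; first by rewrite /vnorm sqrtr_ge0.
exact: vnorm_le_sqrt (sqdist_pair_ge0 _ _ _) XD.
Qed.

Lemma pmm_res_sum k : \sum_(1 <= j < k.+1) (rho j * gamma j) *: res j = z k - z 0.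
Proof.
rewrite big_add1 /= -(telescope_sumr z (leq0n k)).
by apply: eq_bigr => j _; rewrite (zE (ltn0Sn j)) /= [RHS]addrC addKr.
Qed.

Lemma pmm_xy_sum k : \sum_(1 <= j < k.+1) (rho j * gamma j) *: (x j - y j) = w 0 - w k.
Proof.
rewrite big_add1 /= -(opprB (w k)) -(telescope_sumr w (leq0n k)) -sumrN.
apply: eq_bigr => j _; rewrite (wE (ltn0Sn j)) /pmm_y /=.
move: (x j.+1) (w j) (u j.+1 *m M) => X W P.
by apply/rowP => i; rewrite !mxE; ring.
Qed.

Lemma pmm_residual_bound k : (0 < k)%N ->
  vnorm (wavg rho gamma u k *m M + wavg rho gamma v k *m C - d) <= 4 * d0 / rate k.
Proof.
move=> k0; rewrite mulrAC; apply: (dist_pair_ge_scale pmm_Se_nonempty) => [|p Sp].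
  by rewrite divr_gt0 ?pmm_rate_gt0.
have -> : wavg rho gamma u k *m M + wavg rho gamma v k *m C - d = wavg rho gamma (fun j => res j) k.
  by rewrite wavgB wavgD !wavg_mulmx (wavg_const pmm_weight_gt0 _ k0).
rewrite /wavg pmm_res_sum; apply: pmm_scaled_bound => //.
by have := pmm_iterate_drift k Sp; have := dotpp_ge0 (w k - w 0); lra.
Qed.

Lemma pmm_xy_bound k : (0 < k)%N ->
  vnorm (wavg rho gamma x k - wavg rho gamma y k) <= 4 * d0 / rate k.
Proof.
move=> k0; rewrite mulrAC; apply: (dist_pair_ge_scale pmm_Se_nonempty) => [|p Sp].
  by rewrite divr_gt0 ?pmm_rate_gt0.
rewrite -wavgB /wavg pmm_xy_sum; apply: pmm_scaled_bound => //.
rewrite dotp_sqrB.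
by have := pmm_iterate_drift k Sp; have := dotpp_ge0 (z k - z 0); lra.
Qed.

Lemma pmm_esubdiff_g k : (0 < k)%N ->
  esubdiff g (wmean rho gamma (fun j => dotp (v j - wavg rho gamma v k) (- (x j *m C^T))) k)
    (wavg rho gamma v k) (- (wavg rho gamma x k *m C^T)).
Proof.
move=> k0; rewrite -wavg_mulmx -[X in esubdiff _ _ _ X]wavgN.
have [g_noo _] := gP.
by apply: (wavg_esubdiff pmm_weight_gt0) => //; exact: pmm_subdiff_g.
Qed.

Lemma pmm_esubdiff_f k : (0 < k)%N ->
  esubdiff f (wmean rho gamma (fun j => dotp (u j - wavg rho gamma u k) (- (y j *m M^T))) k)
    (wavg rho gamma u k) (- (wavg rho gamma y k *m M^T)).
Proof.
move=> k0; rewrite -wavg_mulmx -[X in esubdiff _ _ _ X]wavgN.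
have [f_noo _] := fP.
by apply: (wavg_esubdiff pmm_weight_gt0) => //; exact: pmm_subdiff_f.
Qed.

Lemma pmm_eps_gap k : (0 < k)%N ->
  wmean rho gamma (fun j => dotp (u j - wavg rho gamma u k) (- (y j *m M^T))) k
  + wmean rho gamma (fun j => dotp (v j - wavg rho gamma v k) (- (x j *m C^T))) k
  = wmean rho gamma (fun j => pmm_gap j (wavg rho gamma x k, wavg rho gamma u k *m M)) k.
Proof.
move=> k0; set xb := wavg rho gamma x k; set ub := wavg rho gamma u k.
set vb := wavg rho gamma v k.
have -> : (fun j => pmm_gap j (xb, ub *m M)) = fun j =>
    dotp (u j - ub) (- (y j *m M^T)) + dotp (v j - vb) (- (x j *m C^T))
    + (dotp xb (res j) - dotp (x j) (ub *m M + vb *m C - d)).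
  by apply: funext => j; rewrite /pmm_gap /= (pmm_gap_split xb (ub *m M) (vb *m C)) !dotpB_mulmx_tr.
rewrite !wmeanD wmeanN -dotp_wavgr -dotp_wavgl -/xb.
have -> : wavg rho gamma (fun j => res j) k = ub *m M + vb *m C - d.
  by rewrite wavgB wavgD !wavg_mulmx (wavg_const pmm_weight_gt0 _ k0).
by rewrite subrr addr0.
Qed.

Lemma pmm_gap_sum_le k p :
  \sum_(1 <= j < k.+1) rho j * gamma j * pmm_gap j p <= (D p 0 - D p k) / 2.
Proof.
have tele : \sum_(1 <= j < k.+1) (D p j.-1 - D p j) = D p 0 - D p k.
  rewrite big_add1 /= -(opprB (D p k)) -(telescope_sumr (fun j => D p j) (leq0n k)) -sumrN.
  by apply: eq_bigr => j _; rewrite opprB.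
rewrite -tele mulr_suml big_nat_cond [leRHS]big_nat_cond.
apply: ler_sum => j /andP[/andP[j0 _] _].
by rewrite pmm_fejer_identity // lerBlDr lerDl divr_ge0 ?pmm_decr_ge0.
Qed.

Lemma pmm_avg_sqdist_le k p : (0 < k)%N -> Se h1 h2 p ->
  D (wavg rho gamma x k, wavg rho gamma u k *m M) 0 <= 8 * D p 0 * theta.
Proof.
move=> k0 Sp; rewrite /sqdist_pair /=; have wconst := wavg_const pmm_weight_gt0 _ k0.
have -> : wavg rho gamma x k - z 0 = wavg rho gamma (fun j => x j - z 0) k.
  by rewrite wavgB wconst.
have -> : wavg rho gamma u k *m M - w 0 = wavg rho gamma (fun j => u j *m M - w 0) k.
  by rewrite wavgB wavg_mulmx wconst.
apply: le_trans (lerD (wavg_dotpp_le pmm_weight_gt0 _ k0) (wavg_dotpp_le pmm_weight_gt0 _ k0)) _.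
rewrite -wmeanD -(wmean_const pmm_weight_gt0 (8 * D p 0 * theta) k0).
by apply: (wmean_le pmm_weight_gt0) => j j0; exact: pmm_iterate_bound.
Qed.

Lemma pmm_eps_bound k : (0 < k)%N ->
  wmean rho gamma (fun j => dotp (u j - wavg rho gamma u k) (- (y j *m M^T))) k
  + wmean rho gamma (fun j => dotp (v j - wavg rho gamma v k) (- (x j *m C^T))) k
    <= 8 * d0 ^+ 2 * theta / rate k.
Proof.
move=> k0; rewrite pmm_eps_gap //.
set pb := (wavg rho gamma x k, wavg rho gamma u k *m M); set eps := wmean _ _ _ _.
have G0 := Gam_gt0 pmm_weight_gt0 k0; have rate0 := pmm_rate_gt0 k0.
have Geps : Gam rho gamma k * eps <= D pb 0 / 2.
  rewrite /eps /wmean mulVKf ?gt_eqF //; apply: le_trans (pmm_gap_sum_le k pb) _.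
  by rewrite ler_pM2r // gerBl sqdist_pair_ge0.
have theta0 : 0 < theta.
  by apply: ltr_wpDl => //; rewrite invr_ge0; exact: mulr_ge0 (sqr_ge0 _) (sqr_ge0 _).
rewrite (_ : 8 * d0 ^+ 2 * theta / rate k = 8 * theta / rate k * d0 ^+ 2); last by ring.
apply: (sqr_dist_pair_ge_scale pmm_Se_nonempty) => [|p Sp].
  by rewrite !mulr_gt0 ?invr_gt0.
have := pmm_avg_sqdist_le k0 Sp; have := sqdist_pair_ge0 (z 0) (w 0) p.
case: (lerP eps 0) => [e0|e0] D_ge0 pb_le.
  by apply: le_trans e0 _; rewrite !mulr_ge0 ?invr_ge0 ?(ltW rate0) ?(ltW theta0).
have GK := ler_wpM2l (ltW e0) (pmm_Gam_ge k).
rewrite mulrAC ler_pdivlMr //; lra.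
Qed.

End PMM.

Theorem mainTheorem8 (R : realType) (m1 m2 n : nat)
  (f : 'rV[R]_m1 -> \bar R) (g : 'rV[R]_m2 -> \bar R)
  (M : 'M[R]_(m1, n)) (C : 'M[R]_(m2, n)) (d : 'rV[R]_n)
  (lam rhobar : R)
  (u : nat -> 'rV[R]_m1) (v : nat -> 'rV[R]_m2) (z w : nat -> 'rV[R]_n)
  (gamma rho : nat -> R) :
  proper_fun f -> closed_fun f -> convex_fun f ->
  proper_fun g -> closed_fun g -> convex_fun g ->
  (* (A.1) *)
  (exists us vs zs, saddle_point f g M C d us vs zs) ->
  (* (A.2), (A.3) *)
  (exists s, rel_int (edom (fconj f)) (s *m M^T)) ->
  (exists s, rel_int (edom (fconj g)) (s *m C^T)) ->
  0 < lam -> 0 <= rhobar < 1 ->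
  (* PMM, step 1 *)
  (forall k, (0 < k)%N -> forall v' : 'rV[R]_m2,
     (g (v k) + (dotp (z k.-1 + lam *: w k.-1) (v k *m C - d)
                 + lam / 2 * dotp (v k *m C - d) (v k *m C - d))%:E
      <= g v' + (dotp (z k.-1 + lam *: w k.-1) (v' *m C - d)
                 + lam / 2 * dotp (v' *m C - d) (v' *m C - d))%:E)%E) ->
  (forall k, (0 < k)%N -> forall u' : 'rV[R]_m1,
     (f (u k) + (dotp (z k.-1 + lam *: (v k *m C - d)) (u k *m M)
                 + lam / 2 * dotp (u k *m M) (u k *m M))%:E
      <= f u' + (dotp (z k.-1 + lam *: (v k *m C - d)) (u' *m M)
                 + lam / 2 * dotp (u' *m M) (u' *m M))%:E)%E) ->
  (* PMM, step 2: the method never stops *)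
  (forall k, (0 < k)%N ->
     vnorm (u k *m M + v k *m C - d) + vnorm (u k *m M - w k.-1) != 0) ->
  (forall k, (0 < k)%N ->
     gamma k =
       (lam * dotp (v k *m C - d + w k.-1) (v k *m C - d + w k.-1)
        + lam * dotp (d - v k *m C - u k *m M) (w k.-1 - u k *m M))
       / (dotp (u k *m M + v k *m C - d) (u k *m M + v k *m C - d)
          + lam ^+ 2 * dotp (u k *m M - w k.-1) (u k *m M - w k.-1))) ->
  (* PMM, step 3 *)
  (forall k, (0 < k)%N -> 1 - rhobar <= rho k <= 1 + rhobar) ->
  (forall k, (0 < k)%N ->
     z k = z k.-1 + (rho k * gamma k) *: (u k *m M + v k *m C - d)) ->
  (forall k, (0 < k)%N ->
     w k = w k.-1 - (rho k * gamma k * lam) *: (w k.-1 - u k *m M)) ->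
  let x := fun k => z k.-1 + lam *: w k.-1 + lam *: (v k *m C - d) in
  let y := fun k => x k - lam *: (w k.-1 - u k *m M) in
  let ubar := wavg rho gamma u in
  let vbar := wavg rho gamma v in
  let xbar := wavg rho gamma x in
  let ybar := wavg rho gamma y in
  let epsu := fun k => (Gam rho gamma k)^-1 *
      \sum_(1 <= j < k.+1) rho j * gamma j * dotp (u j - ubar k) (- (y j *m M^T)) in
  let epsv := fun k => (Gam rho gamma k)^-1 *
      \sum_(1 <= j < k.+1) rho j * gamma j * dotp (v j - vbar k) (- (x j *m C^T)) in
  let h1 := fun zz => fconj f (- (zz *m M^T)) in
  let h2 := fun zz => (fconj g (- (zz *m C^T)) + (dotp d zz)%:E)%E in
  let d0 := dist_pair (z 0%N) (w 0%N) (Se h1 h2) in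
  let tau := Num.min lam lam^-1 in
  let theta := (tau ^+ 2 * (1 - rhobar) ^+ 2)^-1 + 1 in
  forall k, (0 < k)%N ->
  [/\ exists s, esubdiff g (epsv k) (vbar k) s /\ 0 = s + xbar k *m C^T,
      exists s, esubdiff f (epsu k) (ubar k) s /\ 0 = s + ybar k *m M^T,
      vnorm (ubar k *m M + vbar k *m C - d)
        <= 4 * d0 / (k%:R * (1 - rhobar) * tau),
      vnorm (xbar k - ybar k) <= 4 * d0 / (k%:R * (1 - rhobar) * tau)
    & epsu k + epsv k <= 8 * d0 ^+ 2 * theta / (k%:R * (1 - rhobar) * tau)].
Proof.
move=> fP _ fV gP _ gV saddle _ _ lam_gt0 rhobar_range v_min u_min not_stopped gammaE
  rho_range zE wE x y ubar vbar xbar ybar epsu epsv h1 h2 d0 tau theta k k0.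
split.
- exists (- (xbar k *m C^T)); split; last by rewrite addNr.
  by apply: (pmm_esubdiff_g (M := M) (u := u) (rhobar := rhobar)).
- exists (- (ybar k *m M^T)); split; last by rewrite addNr.
  by apply: (pmm_esubdiff_f (rhobar := rhobar)).
- by apply: pmm_residual_bound.
- by apply: pmm_xy_bound.
- by apply: pmm_eps_bound.
Qed.
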